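(* For all integers $t,s\ge 0$ and $r\ge 1$, $$\max_{\mathbf{u}\in\mathbb{Z}_+^r}\bigl|\mathcal{A}_{t,s}(\mathbf{u})\bigr| = A_{t,s}(r).$$ Consequently, for any $q\ge2$, $\max_{\mathbf{x}\in J_r^*}|\mathcal{B}_{t,s}(\mathbf{x})|=A_{t,s}(r)$.
   Context: For $\mathbf{u}=(u_1,\dots,u_r)\in\mathbb{Z}_+^r$ (positive integers), the asymmetric error ball is $\mathcal{A}_{t,s}(\mathbf{u})=\{\mathbf{v}\in\mathbb{Z}_+^r:\ \sum_{i=1}^r\max\{0,u_i-v_i\}\le s,\ \sum_{i=1}^r\max\{0,v_i-u_i\}\le t\}$. The numbers $A_{t,s}(r)$ (integers $t,s$, $r\ge1$) are defined by: $A_{t,s}(r)=0$ if $t<0$ or $s<0$; $A_{t,s}(1)=t+s+1$ for $t,s\ge0$; for $r\ge2$, $t,s\ge0$: $A_{t,s}(r)=\sum_{i=1}^{t}A_{t-i,s}(r-1)+\sum_{i=1}^{s}A_{t,s-i}(r-1)+A_{t,s}(r-1)$. For the consequence: $J_r^*$ is the set of strings over $\Sigma_q=\{0,\dots,q-1\}$ with exactly $r$ runs; writing $\mathbf{x}=c_1^{u_1}\cdots c_r^{u_r}$ ($c_i\ne c_{i+1}$, $u_i\ge1$), the sticky-insdel ball $\mathcal{B}_{t,s}(\mathbf{x})$ is the set of strings $c_1^{v_1}\cdots c_r^{v_r}$ with $(v_1,\dots,v_r)\in\mathcal{A}_{t,s}(u_1,\dots,u_r)$ (i.e. strings obtainable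 by at most $t$ sticky insertions and at most $s$ sticky deletions). *)

From mathcomp Require Import all_boot.
Set Implicit Arguments. Unset Strict Implicit. Unset Printing Implicit Defensive.

Definition Zplus (r : nat) (u : seq nat) : bool :=
  (size u == r) && all (fun x => 0 < x) u.

(* Asymmetric error ball A_{t,s}(u) as a predicate on v.
   On nat, truncated subtraction a - b = max{0, a - b}. *)
Definition asym_ball (t s : nat) (u v : seq nat) : Prop :=
  Zplus (size u) v /\
  sumn [seq p.1 - p.2 | p <- zip u v] <= s /\
  sumn [seq p.2 - p.1 | p <- zip u v] <= t.

(* A_{t,s}(k+1), defined by recursion on k = r - 1 (t, s >= 0). *)
Fixpoint Arec (k t s : nat) {struct k} : nat :=
  match k with
  | 0 => t + s + 1
  | k'.+1 => \sum_(1 <= i < t.+1) Arec k' (t - i) s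
           + \sum_(1 <= i < s.+1) Arec k' t (s - i)
           + Arec k' t s
  end.

Definition Anum (t s r : nat) : nat := Arec r.-1 t s.

Definition has_card (T : eqType) (P : T -> Prop) (n : nat) : Prop :=
  exists l : seq T, [/\ uniq l, size l = n & forall x, x \in l <-> P x].

(* run-length encoding: x = c_1^{u_1} ... c_r^{u_r}, c_i <> c_{i+1}, u_i >= 1 *)
Fixpoint rle (T : eqType) (x : seq T) : seq (T * nat) :=
  match x with
  | [::] => [::]
  | a :: x' =>
      match rle x' with
      | [::] => [:: (a, 1)]
      | (b, n) :: r => if a == b then (b, n.+1) :: r else (a, 1) :: (b, n) :: r
      end
  end.

Definition nruns (T : eqType) (x : seq T) : nat := size (rle x).

Definition sticky_ball (T : eqType) (t s : nat) (x y : seq T) : Prop :=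
  exists v : seq nat,
    asym_ball t s (unzip2 (rle x)) v /\
    y = flatten [seq nseq p.2 p.1 | p <- zip (unzip1 (rle x)) v].

From mathcomp Require Import all_boot zify.
Set Implicit Arguments. Unset Strict Implicit.

(* A vector v of A_{t,s}(u) is chosen coordinate by coordinate: v_1 = u_1 + i
   spends i of the t insertions, while v_1 = u_1 - i spends i of the s deletions
   and needs i < u_1.  Counting these choices reproduces the recursion defining
   A_{t,s}(r), except that the deletions at a coordinate are capped by u_1 - 1;
   hence |A_{t,s}(u)| <= A_{t,s}(r), with equality once every u_i exceeds s.
   A string is recovered from its run letters and run lengths, so its sticky
   ball is an injective image of the asymmetric ball of its run lengths; two
   alternating letters with all runs of length s + 1 attain the bound. *)

(* The recursion of [Arec] started one step earlier: the ball of the empty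
   vector has one element. *)
Fixpoint Aext (r t s : nat) : nat :=
  if r is r'.+1 then
    \sum_(1 <= i < t.+1) Aext r' (t - i) s
  + \sum_(1 <= i < s.+1) Aext r' t (s - i)
  + Aext r' t s
  else 1.

Lemma Anum_Aext r t s : 0 < r -> Anum t s r = Aext r t s.
Proof.
case: r => // r _; rewrite /Anum /=.
elim: r t s => [|r IHr] t s.
  by rewrite /= !sum_nat_const_nat !muln1 !subSS !subn0.
rewrite [LHS]/= IHr.
by under eq_bigr do rewrite IHr; under [X in _ + X + _]eq_bigr do rewrite IHr.
Qed.

Lemma asym_ball_nil t s v : asym_ball t s [::] v <-> v = [::].
Proof. by case: v => [|b w]; split => // -[]. Qed.

Lemma asym_ball_cons t s a u b w :
  asym_ball t s (a :: u) (b :: w) <->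
  [/\ 0 < b, a - b <= s, b - a <= t &
      asym_ball (t - (b - a)) (s - (a - b)) u w].
Proof.
rewrite /asym_ball /Zplus /= eqSS; split.
  by move=> [/and3P[-> -> ->] [? ?]]; split => //; lia.
by move=> [-> ? ? [/andP[-> ->] [? ?]]]; split => //; lia.
Qed.

Fixpoint ball_enum (t s : nat) (u : seq nat) : seq (seq nat) :=
  if u is a :: u' then
    [seq b :: w | b <- iota (a - minn s a.-1) (minn s a.-1 + t.+1),
                  w <- ball_enum (t - (b - a)) (s - (a - b)) u']
  else [:: [::]].

Lemma mem_ball_enum t s u v : all (fun a => 0 < a) u ->
  (v \in ball_enum t s u) <-> asym_ball t s u v.
Proof.
elim: u t s v => [|a u IHu] t s v /=; first by rewrite inE asym_ball_nil; split => /eqP.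
move=> /andP[a_gt0 u_pos]; case: v => [|b w].
  by split; [move=> /allpairsPdep[? [? [_ _ //]]] | case].
rewrite asym_ball_cons; split.
  move=> /allpairsPdep[b' [w' [+ + [-> ->]]]].
  by rewrite mem_iota (IHu _ _ _ u_pos) => ? ?; split => //; lia.
move=> [b_gt0 ? ? /(IHu _ _ _ u_pos) w_in].
by apply/allpairsPdep; exists b, w; rewrite mem_iota; split => //; lia.
Qed.

Lemma ball_enum_uniq t s u : uniq (ball_enum t s u).
Proof.
elim: u t s => [|a u IHu] t s //=.
apply: allpairs_uniq_dep => //; first exact: iota_uniq.
by move=> [? ?] [? ?] _ _ /= [-> ->].
Qed.

Lemma has_card_asym_ball t s u : all (fun a => 0 < a) u ->
  has_card (asym_ball t s u) (size (ball_enum t s u)).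
Proof.
by move=> u_pos; exists (ball_enum t s u); split => //;
  [exact: ball_enum_uniq | move=> v; exact: mem_ball_enum].
Qed.

Lemma sum_nat_rev (F : nat -> nat) a m : m <= a ->
  \sum_(a - m <= b < a) F (a - b) = \sum_(1 <= i < m.+1) F i.
Proof.
elim: m => [|m IHm] le_ma; first by rewrite subn0 !big_geq.
rewrite big_ltn; last lia.
rewrite big_nat_recr //= -IHm; last lia.
by rewrite addnC; congr (_ + _); [congr (\sum_(_ <= _ < _) _); lia | congr F; lia].
Qed.

Lemma size_ball_enum_cons t s a u (m := minn s a.-1) :
  size (ball_enum t s (a :: u)) =
    \sum_(1 <= i < t.+1) size (ball_enum (t - i) s u)
  + \sum_(1 <= i < m.+1) size (ball_enum t (s - i) u)
  + size (ball_enum t s u).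
Proof.
rewrite /= size_allpairs_dep -/m iotaD map_cat sumn_cat.
have -> : a - m + m = a by lia.
rewrite /= subnn !subn0 -(addn1 a) iotaDl -map_comp.
rewrite [_ + sumn _]addnC addnCA addnA !sumnE !big_map; congr (_ + _ + _).
- rewrite /index_iota subn1; apply: eq_big_seq => i; rewrite mem_iota => /andP[i_gt0 _] /=.
  by congr (size (ball_enum _ _ _)); lia.
- have -> : iota (a - m) m = index_iota (a - m) a by rewrite /index_iota; congr iota; lia.
  rewrite -(@sum_nat_rev (fun i => size (ball_enum t (s - i) u)) a); last lia.
  by apply: eq_big_nat => b /andP[_ lt_ba]; congr (size (ball_enum _ _ _)); lia.
Qed.

Lemma size_ball_enum_le t s u : size (ball_enum t s u) <= Aext (size u) t s.
Proof.
elim: u t s => [|a u IHu] t s //.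
rewrite size_ball_enum_cons [Aext _ _ _]/=.
apply: leq_add (IHu t s); apply: leq_add; first by apply: leq_sum.
have le_ms : minn s a.-1 <= s by exact: geq_minl.
rewrite [leqRHS](@big_cat_nat _ _ _ (minn s a.-1).+1) //=.
by apply: leq_trans _ (leq_addr _ _); apply: leq_sum.
Qed.

Lemma size_ball_enum_large t s u : all (fun a => s < a) u ->
  size (ball_enum t s u) = Aext (size u) t s.
Proof.
elim: u t s => [|a u IHu] t s // /andP[lt_sa u_large].
rewrite size_ball_enum_cons [Aext _ _ _]/=.
have -> : minn s a.-1 = s by lia.
congr (_ + _ + _); last exact: IHu.
  by apply: eq_bigr => i _; apply: IHu.
apply: eq_bigr => i _; apply: IHu.
by apply: sub_all u_large => b; lia.
Qed.

Definition expand_runs (T : Type) (c : seq T) (v : seq nat) : seq T :=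
  flatten [seq nseq p.2 p.1 | p <- zip c v].

Lemma rle_cons_run (T : eqType) (a : T) x n r :
  rle x = (a, n) :: r -> rle (a :: x) = (a, n.+1) :: r.
Proof. by move=> /= ->; rewrite eqxx. Qed.

Lemma rle_nseq_cat (T : eqType) (a : T) n y :
  path (fun b c => b != c) a (unzip1 (rle y)) ->
  rle (nseq n.+1 a ++ y) = (a, n.+1) :: rle y.
Proof.
move=> a_y; elim: n => [|n IHn]; last exact: rle_cons_run.
by move: a_y => /=; case: (rle y) => [|[b m] r] //= /andP[/negbTE ->].
Qed.

Lemma rle_expand_runs (T : eqType) (c : seq T) v :
  size c = size v -> all (fun n => 0 < n) v -> sorted (fun a b => a != b) c ->
  rle (expand_runs c v) = zip c v.
Proof.
elim: c v => [|a c IHc] [|n v] //= [size_cv] /andP[n_gt0 v_pos] c_path.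
case: n n_gt0 => // n _.
have rle_cv := IHc v size_cv v_pos (path_sorted c_path).
have -> : expand_runs (a :: c) (n.+1 :: v) = nseq n.+1 a ++ expand_runs c v by [].
rewrite rle_nseq_cat rle_cv //.
by rewrite unzip1_zip // size_cv.
Qed.

Lemma rle_counts_pos (T : eqType) (x : seq T) : all (fun n => 0 < n) (unzip2 (rle x)).
Proof.
elim: x => [|a x IHx] //=.
by case: (rle x) IHx => [|[b n] r] //=; case: eqP => _ /= /andP[n_gt0 ->]; rewrite ?n_gt0.
Qed.

Lemma rle_letters_sorted (T : eqType) (x : seq T) :
  sorted (fun a b => a != b) (unzip1 (rle x)).
Proof.
elim: x => [|a x IHx] //=.
case: (rle x) IHx => [|[b n] r] //=.
by case: eqP => [_|/eqP a_neq_b] //= ->; rewrite a_neq_b.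
Qed.

Lemma has_card_image (T U : eqType) (P : T -> Prop) (f : T -> U) n :
  has_card P n -> (forall x y, P x -> P y -> f x = f y -> x = y) ->
  has_card (fun z => exists x, P x /\ z = f x) n.
Proof.
move=> [l [l_uniq <- memP]] f_inj; exists (map f l); split.
- by rewrite map_inj_in_uniq // => x y /memP Px /memP Py; apply: f_inj.
- by rewrite size_map.
- move=> z; split; first by move=> /mapP[x /memP Px ->]; exists x.
  by move=> [x [/memP x_l ->]]; apply: map_f.
Qed.

Lemma has_card_sticky_ball (T : eqType) t s (x : seq T) :
  has_card (sticky_ball t s x) (size (ball_enum t s (unzip2 (rle x)))).
Proof.
apply: (has_card_image (f := expand_runs (unzip1 (rle x)))).
  exact/has_card_asym_ball/rle_counts_pos.
move=> v1 v2 [/andP[/eqP size_v1 v1_pos] _] [/andP[/eqP size_v2 v2_pos] _].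
rewrite size_map in size_v1 size_v2.
move=> /(congr1 (fun y => unzip2 (rle y))).
rewrite !rle_expand_runs ?rle_letters_sorted ?size_map ?size_v1 ?size_v2 //.
by rewrite !unzip2_zip ?size_map ?size_v1 ?size_v2.
Qed.

Fixpoint alternate (T : Type) (a b : T) (n : nat) : seq T :=
  if n is n'.+1 then a :: alternate b a n' else [::].

Lemma size_alternate (T : Type) (a b : T) n : size (alternate a b n) = n.
Proof. by elim: n a b => //= n IHn a b; rewrite IHn. Qed.

Lemma alternate_sorted (T : eqType) (a b : T) n :
  a != b -> sorted (fun x y => x != y) (alternate a b n).
Proof.
case: n => //= n; elim: n a b => //= n IHn a b a_neq_b.
by rewrite a_neq_b IHn // eq_sym.
Qed.

Theorem mainTheorem2 (t s r : nat) (hr : 1 <= r) :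
  ((forall u : seq nat, Zplus r u ->
      exists n, has_card (asym_ball t s u) n /\ n <= Anum t s r) /\
   (exists u : seq nat, Zplus r u /\ has_card (asym_ball t s u) (Anum t s r)))
  /\
  (forall q : nat, 2 <= q ->
     (forall x : seq 'I_q, nruns x = r ->
        exists n, has_card (sticky_ball t s x) n /\ n <= Anum t s r) /\
     (exists x : seq 'I_q, nruns x = r /\
        has_card (sticky_ball t s x) (Anum t s r))).
Proof.
rewrite Anum_Aext //; set u0 := nseq r s.+1.
have u0_pos : all (fun a => 0 < a) u0 by rewrite all_nseq orbT.
have card_u0 : size (ball_enum t s u0) = Aext r t s.
  by rewrite size_ball_enum_large ?size_nseq // all_nseq ltnSn orbT.
split; [split | move=> q q_ge2; split].
- move=> u /andP[/eqP <- u_pos]; exists (size (ball_enum t s u)).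
  by split; [exact: has_card_asym_ball | exact: size_ball_enum_le].
- exists u0; split; first by rewrite /Zplus size_nseq eqxx.
  by rewrite -card_u0; exact: has_card_asym_ball.
- move=> x <-; exists (size (ball_enum t s (unzip2 (rle x)))).
  split; first exact: has_card_sticky_ball.
  by rewrite /nruns -(size_map snd); exact: size_ball_enum_le.
case: q q_ge2 => [|[|q]] // _.
pose c0 := alternate (ord0 : 'I_q.+2) ord_max r.
pose x0 := expand_runs c0 u0.
have rle_x0 : rle x0 = zip c0 u0.
  by apply: rle_expand_runs; rewrite ?size_alternate ?size_nseq ?alternate_sorted.
exists x0; split; first by rewrite /nruns rle_x0 size_zip size_alternate size_nseq minnn.
have := has_card_sticky_ball t s x0.
by rewrite rle_x0 unzip2_zip ?card_u0 // size_alternate size_nseq.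
Qed.
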